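(* For any object $(E,\sigma)$ of $\mathrm{OS}_B$, the poset $E^\star$ is Noetherian, i.e. every upward-closed subset of $E^\star$ has only finitely many minimal elements.
   Context: An object of $\mathrm{OS}_B$ is a pair $(E,\sigma)$ with $E$ a totally ordered finite set and $\sigma$ an order-reversing involution with a unique fixed point; write $-e:=\sigma(e)$. $E^\star$ is the set of finite words in the alphabet $E$, partially ordered by: $e_1\cdots e_m\le f_1\cdots f_n$ iff there is a strictly increasing map $\theta:[m]\to[n]$ such that $e_i=f_{\theta(i)}$ for all $i\in[m]$, and for every $j\in[n]$ there exists $i\in[m]$ with $\theta(i)\le j$ and $f_{\theta(i)}\in\{f_j,-f_j\}$. (That is, the first word is a subword of the second containing the first occurrence of every $\sigma$-orbit appearing in the second.) *)

From mathcomp Require Import all_boot all_order.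
Set Implicit Arguments. Unset Strict Implicit. Unset Printing Implicit Defensive.
Import Order.TTheory.
Local Open Scope order_scope.

Definition OSB_object (d : Order.disp_t) (E : finOrderType d) (sigma : E -> E) : Prop :=
  [/\ involutive sigma,
      (forall x y : E, x <= y -> sigma y <= sigma x) &
      exists! e : E, sigma e = e].

Definition word_le (T : eqType) (sigma : T -> T) (u v : seq T) : Prop :=
  exists theta : 'I_(size u) -> 'I_(size v),
    [/\ (forall i j : 'I_(size u), (i < j)%N -> (theta i < theta j)%N),
        (forall i : 'I_(size u), tnth (in_tuple u) i = tnth (in_tuple v) (theta i)) &
        (forall j : 'I_(size v), exists i : 'I_(size u),
            (theta i <= j)%N /\
            (tnth (in_tuple v) (theta i) = tnth (in_tuple v) j \/
             tnth (in_tuple v) (theta i) = sigma (tnth (in_tuple v) j)))].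

Definition upward_closed (T : Type) (le : T -> T -> Prop) (S : T -> Prop) : Prop :=
  forall u v, S u -> le u v -> S v.

Definition minimal_in (T : Type) (le : T -> T -> Prop) (S : T -> Prop) (w : T) : Prop :=
  S w /\ forall u, S u -> le u w -> u = w.

Definition noetherian_poset (T : eqType) (le : T -> T -> Prop) : Prop :=
  forall S : T -> Prop, upward_closed le S ->
    exists s : seq T, forall w, minimal_in le S w -> w \in s.

From Stdlib Require Import Classical ClassicalEpsilon.
From mathcomp Require Import all_boot all_order.
Set Implicit Arguments. Unset Strict Implicit. Unset Printing Implicit Defensive.

(* The proof reduces the statement to Higman's lemma.
   1. Higman's lemma for a finite alphabet (subsequence order), proved by
      Nash-Williams' minimal bad sequence argument: a bad sequence built
      greedily from shortest words cannot exist, since beheading a common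
      first letter along an infinite subsequence yields a shorter bad one.
   2. Encoding: a word v is sent to the word over the finite alphabet
      (E x bool) + {set E} that tags every letter with whether it is the
      first occurrence of its sigma-orbit, followed by the set of letters
      whose orbit meets v.  If code u is a subsequence of code v, then
      u <= v in E*: matched positions give theta, equal orbit supports and
      the first-occurrence flags give the covering condition.
   3. A relation for which every infinite sequence has an increasing pair has
      finitely many minimal elements in any set, as distinct minimal elements
      form such a sequence with no increasing pair.
   Only the involutivity of sigma (and non-emptiness of E) is needed. *)

Lemma ex_min_measure (T : Type) (m : T -> nat) (P : T -> Prop) :
  (exists x, P x) -> exists x, P x /\ forall y, P y -> m x <= m y.
Proof.
case=> x0 Px0; move: {2}(m x0) (erefl (m x0)) => n0.
elim/ltn_ind: n0 x0 Px0 => n IH x Px mx.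
case: (classic (exists y, P y /\ m y < m x)) => [[y [Py lt_yx]] | no_smaller].
  by apply: (IH _ _ y Py erefl); rewrite -mx.
exists x; split=> // y Py; rewrite leqNgt; apply/negP => lt_yx.
by apply: no_smaller; exists y.
Qed.

Lemma infinitely_often_value (A : finType) (g : nat -> A) :
  exists a, forall N, exists2 n, N <= n & g n = a.
Proof.
apply: NNPP => never.
have eventually_not a : exists N, forall n, N <= n -> g n <> a.
  apply: NNPP => H; apply: never; exists a => N; apply: NNPP => H'; apply: H.
  by exists N => n le_Nn gn; apply: H'; exists n.
pose N a := epsilon (inhabits 0) (fun N => forall n, N <= n -> g n <> a).
have NP a : forall n, N a <= n -> g n <> a := epsilon_spec _ _ (eventually_not a).
pose M := \max_a N a; exact: (NP (g M) M (leq_bigmax (g M)) erefl).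
Qed.

Lemma increasing_subsequence (P : nat -> Prop) :
  (forall N, exists2 n, N <= n & P n) ->
  exists h : nat -> nat, (forall k, h k < h k.+1) /\ forall k, P (h k).
Proof.
move=> unbounded.
pose after N := epsilon (inhabits 0) (fun n => N <= n /\ P n).
have afterP N : N <= after N /\ P (after N).
  have [n le_Nn Pn] := unbounded N; rewrite /after.
  by apply: (epsilon_spec _ (fun n => N <= n /\ P n)); exists n.
pose fix h k := if k is k'.+1 then after (h k').+1 else after 0.
exists h; split=> [k | [|k]] /=; [exact: (afterP _).1 | exact: (afterP _).2 ..].
Qed.

Section MinimalBadSequence.
Variable A : finType.

Definition bad (f : nat -> seq A) := forall i j, i < j -> ~~ subseq (f i) (f j).

Definition extends (p : seq (seq A)) (f : nat -> seq A) :=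
  forall i, i < size p -> f i = nth [::] p i.

Definition bad_prefix (p : seq (seq A)) := exists2 f, extends p f & bad f.

(* The shortest word continuing the bad prefix p (arbitrary if there is none). *)
Definition shortest_continuation (p : seq (seq A)) : seq A :=
  epsilon (inhabits [::]) (fun w => bad_prefix (rcons p w) /\
    forall w', bad_prefix (rcons p w') -> size w <= size w').

Lemma shortest_continuationP p : (exists w, bad_prefix (rcons p w)) ->
  bad_prefix (rcons p (shortest_continuation p)) /\
  forall w', bad_prefix (rcons p w') -> size (shortest_continuation p) <= size w'.
Proof. by move=> ex_w; exact: (epsilon_spec _ _ (ex_min_measure size ex_w)). Qed.

Lemma bad_prefix_next p f : extends p f -> bad f -> bad_prefix (rcons p (f (size p))).
Proof.
move=> ext_pf bad_f; exists f => // i; rewrite size_rcons ltnS leq_eqVlt nth_rcons.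
by case/orP => [/eqP-> | lt_ip]; rewrite ?ltnn ?eqxx // lt_ip ext_pf.
Qed.

Fixpoint min_bad_prefix n : seq (seq A) :=
  if n is n'.+1 then rcons (min_bad_prefix n') (shortest_continuation (min_bad_prefix n'))
  else [::].

Definition min_bad n := shortest_continuation (min_bad_prefix n).

Lemma size_min_bad_prefix n : size (min_bad_prefix n) = n.
Proof. by elim: n => //= n IH; rewrite size_rcons IH. Qed.

Lemma nth_min_bad_prefix n i : i < n -> nth [::] (min_bad_prefix n) i = min_bad i.
Proof.
elim: n => // n IH; rewrite ltnS leq_eqVlt => /orP [/eqP-> | lt_in] /=.
  by rewrite nth_rcons size_min_bad_prefix ltnn eqxx.
by rewrite nth_rcons size_min_bad_prefix lt_in IH.
Qed.

Lemma bad_behead_tail (g : nat -> seq A) (h : nat -> nat) (a : A) :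
  bad g -> {homo h : i j / i < j} -> (forall k, g (h k) = a :: behead (g (h k))) ->
  bad (fun i => if i < h 0 then g i else behead (g (h (i - h 0)))).
Proof.
move=> bad_g h_incr g_h i j lt_ij /=.
have h0_le k : h 0 <= h k by case: k => // k; exact/ltnW/h_incr.
case: (ltnP i (h 0)) => lt_i; case: (ltnP j (h 0)) => lt_j.
- exact: bad_g.
- apply: contra (bad_g i (h (j - h 0)) (leq_trans lt_i (h0_le _))) => sub_ij.
  by apply: subseq_trans sub_ij _; rewrite [X in subseq _ X]g_h subseq_cons.
- by have := leq_trans lt_j (leq_trans lt_i (ltnW lt_ij)); rewrite ltnn.
- have lt_k : i - h 0 < j - h 0 by rewrite ltn_sub2r // (leq_ltn_trans lt_i lt_ij).
  by have := bad_g _ _ (h_incr _ _ lt_k); rewrite g_h [X in subseq _ X]g_h /= eqxx.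
Qed.

Hypothesis ex_bad : exists f, bad f.

Lemma bad_min_bad_prefix n : bad_prefix (min_bad_prefix n).
Proof.
elim: n => [|n [f ext_f bad_f]] /=; first by case: ex_bad => f; exists f.
have ex_next : exists w, bad_prefix (rcons (min_bad_prefix n) w).
  by exists (f (size (min_bad_prefix n))); apply: bad_prefix_next.
exact: (shortest_continuationP ex_next).1.
Qed.

Lemma bad_min_bad : bad min_bad.
Proof.
move=> i j lt_ij; case: (bad_min_bad_prefix j.+1) => f ext_f bad_f.
have := bad_f i j lt_ij.
by rewrite !ext_f ?size_min_bad_prefix ?nth_min_bad_prefix // (ltn_trans lt_ij).
Qed.

Lemma min_bad_minimal n w : bad_prefix (rcons (min_bad_prefix n) w) ->
  size (min_bad n) <= size w.
Proof. by move=> bad_w; apply: (shortest_continuationP (ex_intro _ w bad_w)).2. Qed.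

End MinimalBadSequence.

Theorem higman (A : finType) (f : nat -> seq A) : exists i j, i < j /\ subseq (f i) (f j).
Proof.
apply: NNPP => not_good.
have bad_f : bad f.
  by move=> i j lt_ij; apply/negP => sub_ij; apply: not_good; exists i, j.
pose g := min_bad A; have bad_g : bad g := bad_min_bad (ex_intro _ f bad_f).
have [o o_often] := infinitely_often_value (fun n => ohead (g n)).
have [h [h_step h_head]] := increasing_subsequence o_often.
have h_incr : {homo h : i j / i < j} := homo_ltn ltn_trans h_step.
have g_h : exists a, forall k, g (h k) = a :: behead (g (h k)).
  case: o {o_often} h_head => [a|] h_head; last first.
    have := bad_g _ _ (ltnSn (h 0)); move: (h_head 0).
    by case: (g (h 0)) => // _; rewrite sub0seq.
  by exists a => k; move: (h_head k); case: (g (h k)) => //= b t [->].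
have [a {}g_h] := g_h.
pose g' i := if i < h 0 then g i else behead (g (h (i - h 0))).
have : size (g (h 0)) <= size (behead (g (h 0))).
  apply: min_bad_minimal; exists g'; last exact: bad_behead_tail bad_g h_incr g_h.
  move=> i; rewrite size_rcons size_min_bad_prefix ltnS leq_eqVlt /g'.
  rewrite nth_rcons size_min_bad_prefix.
  by case/orP => [/eqP-> | lt_i]; rewrite ?ltnn ?eqxx ?subnn // lt_i nth_min_bad_prefix.
by rewrite [X in size X <= _]g_h /= ltnn.
Qed.

Lemma subseq_positions (T : eqType) (x0 : T) (s t : seq T) : subseq s t ->
  exists th : nat -> nat, [/\ forall i j, i < j -> j < size s -> th i < th j,
    forall i, i < size s -> th i < size t &
    forall i, i < size s -> nth x0 s i = nth x0 t (th i)].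
Proof.
elim: t s => [|y t IH] [|x s] //=; try by exists id.
case: eqP => [<- | _] /IH [th [th_incr th_bound th_nth]].
  exists (fun i => if i is i'.+1 then (th i').+1 else 0).
  by split=> [[|i] [|j] | [|i] | [|i]] //=; rewrite ?ltnS; auto.
exists (fun i => (th i).+1).
by split=> [i j | i | i]; rewrite ?ltnS; auto.
Qed.

Section Encoding.
Variables (E : finType) (sigma : E -> E) (x0 : E).
Hypothesis sigma_inv : involutive sigma.

Definition same_orbit (x y : E) := (x == y) || (x == sigma y).

Lemma same_orbit_refl x : same_orbit x x.
Proof. by rewrite /same_orbit eqxx. Qed.

Lemma same_orbit_sym x y : same_orbit x y -> same_orbit y x.
Proof.
by rewrite /same_orbit => /orP [/eqP-> | /eqP->]; rewrite ?eqxx // sigma_inv eqxx orbT.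
Qed.

Lemma same_orbit_trans x y z : same_orbit x y -> same_orbit y z -> same_orbit x z.
Proof.
rewrite /same_orbit => /orP [/eqP-> | /eqP->] // /orP [/eqP-> | /eqP->];
  by rewrite ?sigma_inv eqxx ?orbT.
Qed.

Definition first_in_orbit (v : seq E) (p : nat) :=
  ~~ has (same_orbit (nth x0 v p)) (take p v).

Definition orbit_support (v : seq E) : {set E} := [set x | has (same_orbit x) v].

Definition code_letter := (E * bool + {set E})%type.

Definition encode (v : seq E) : seq code_letter :=
  rcons [seq inl (nth x0 v p, first_in_orbit v p) | p <- iota 0 (size v)]
        (inr (orbit_support v)).

Lemma size_encode v : size (encode v) = (size v).+1.
Proof. by rewrite size_rcons size_map size_iota. Qed.

Lemma nth_encode c v q : nth c (encode v) q =
  if q < size v then inl (nth x0 v q, first_in_orbit v q)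
  else if q == size v then inr (orbit_support v) else c.
Proof.
rewrite /encode nth_rcons size_map size_iota; case: ifP => // lt_qv.
by rewrite (nth_map 0) ?size_iota // nth_iota.
Qed.

Lemma encode_subseq u v : subseq (encode u) (encode v) ->
  orbit_support u = orbit_support v /\
  exists th : nat -> nat, [/\ forall i j, i < j -> j < size u -> th i < th j &
    forall i, i < size u -> [/\ th i < size v, nth x0 v (th i) = nth x0 u i &
                              first_in_orbit v (th i) = first_in_orbit u i]].
Proof.
move=> /(subseq_positions (inr set0)) [th []]; rewrite !size_encode.
move=> th_incr th_bound th_nth; split.
  have := th_nth (size u) (ltnSn _); rewrite !nth_encode ltnn eqxx.
  have := th_bound (size u) (ltnSn _); rewrite ltnS leq_eqVlt.
  by case/orP => [/eqP-> | lt_th]; rewrite ?ltnn ?eqxx ?lt_th // => -[].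
exists th; split=> [i j lt_ij lt_j | i lt_i]; first by apply: th_incr; rewrite // ltnS ltnW.
have lt_i' := ltn_trans lt_i (ltnSn _).
have := th_nth i lt_i'; rewrite !nth_encode lt_i.
have := th_bound i lt_i'; rewrite ltnS leq_eqVlt.
by case/orP => [/eqP-> | lt_th]; rewrite ?ltnn ?eqxx ?lt_th // => -[-> ->].
Qed.

Lemma first_in_orbit_find u w : has (same_orbit w) u ->
  first_in_orbit u (find (same_orbit w) u).
Proof.
move=> has_w; rewrite /first_in_orbit; apply/negP => /(has_nthP x0) [k].
rewrite size_take -has_find has_w => lt_k; rewrite nth_take // => orbit_k.
have := before_find x0 lt_k.
by rewrite (same_orbit_trans (nth_find x0 has_w) orbit_k).
Qed.

Lemma first_in_orbit_le v p j : p < size v -> first_in_orbit v p ->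
  same_orbit (nth x0 v p) (nth x0 v j) -> j < size v -> p <= j.
Proof.
move=> lt_p first_p orbit_pj lt_j; rewrite leqNgt; apply/negP => lt_jp.
move/negP: first_p; apply; apply/hasP; exists (nth x0 v j) => //.
by rewrite -(nth_take x0 lt_jp) mem_nth // size_take lt_p.
Qed.

(* Each position j of v is covered by the first letter of u in the orbit of
   v_j, whose image is a first-in-orbit position of v, hence at most j. *)
Lemma word_le_of_encode u v : subseq (encode u) (encode v) -> word_le sigma u v.
Proof.
move=> /encode_subseq [same_support [th [th_incr th_at]]].
have th_bound (i : 'I_(size u)) : th i < size v by case: (th_at i (ltn_ord i)).
exists (fun i => Ordinal (th_bound i)); split.
- by move=> i j lt_ij /=; apply: th_incr => //.
- by move=> i; rewrite !(tnth_nth x0) /=; case: (th_at i (ltn_ord i)).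
move=> j; set w := nth x0 v j.
have has_w : has (same_orbit w) u.
  have : w \in orbit_support v.
    by rewrite inE; apply/hasP; exists w; rewrite ?same_orbit_refl ?mem_nth.
  by rewrite -same_support inE.
have lt_find : find (same_orbit w) u < size u by rewrite -has_find.
have orbit_find := nth_find x0 has_w.
exists (Ordinal lt_find); rewrite !(tnth_nth x0) /=.
have [lt_th th_letter th_first] := th_at _ lt_find.
rewrite th_letter; split.
  apply: (first_in_orbit_le lt_th _ _ (ltn_ord j)).
    by rewrite th_first first_in_orbit_find.
  by rewrite th_letter; apply: same_orbit_sym.
by case/orP: (same_orbit_sym orbit_find) => /eqP->; [left | right].
Qed.

Lemma word_le_good (f : nat -> seq E) : exists i j, i < j /\ word_le sigma (f i) (f j).
Proof.
have [i [j [lt_ij sub_ij]]] := higman (fun n => encode (f n)).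
by exists i, j; split=> //; apply: word_le_of_encode.
Qed.

End Encoding.

(* A relation under which every sequence is good has finitely many minimal
   elements in every set: distinct minimal elements would form a bad sequence. *)
Lemma good_noetherian (T : eqType) (le : T -> T -> Prop) :
  (forall f : nat -> T, exists i j, i < j /\ le (f i) (f j)) -> noetherian_poset le.
Proof.
move=> good S _; apply: NNPP => infinite.
have new_min (s : seq T) : exists w, minimal_in le S w /\ w \notin s.
  apply: NNPP => none; apply: infinite; exists s => w min_w.
  by apply: NNPP => w_notin; apply: none; exists w; split=> //; apply/negP.
have [w0 _] := new_min [::].
pose pick (s : seq T) := epsilon (inhabits w0) (fun w => minimal_in le S w /\ w \notin s).
have pickP (s : seq T) : minimal_in le S (pick s) /\ pick s \notin s.
  exact: (epsilon_spec _ _ (new_min s)).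
pose fix chosen n := if n is n'.+1 then rcons (chosen n') (pick (chosen n')) else [::].
pose f n := pick (chosen n).
have chosen_f j i : i < j -> f i \in chosen j.
  elim: j => // j IH; rewrite ltnS leq_eqVlt /= mem_rcons in_cons.
  by case/orP => [/eqP-> | /IH->]; rewrite ?eqxx ?orbT.
have [i [j [lt_ij le_ij]]] := good f.
have [[_ min_j] fresh_j] := pickP (chosen j).
have [[S_i _] _] := pickP (chosen i).
by move: fresh_j; rewrite -(min_j _ S_i le_ij) chosen_f.
Qed.

Theorem mainTheorem7 (d : Order.disp_t) (E : finOrderType d) (sigma : E -> E) :
  OSB_object sigma -> noetherian_poset (word_le sigma).
Proof.
case=> sigma_inv _ [x0 _].
by apply: good_noetherian; apply: word_le_good x0 sigma_inv.
Qed.
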